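(* For every integer $n\geq 1$ there exists a $4$-dimensional Minkowski space $X$ whose norm is smooth and strictly convex and such that $m(X)\geq n$.
   Context: A Minkowski space is a finite-dimensional real normed space $(X,\|\cdot\|)$. For a set $S\subseteq X$, its midpoint set is $M(S)=\{\tfrac12(x+y): x,y\in S,\ x\neq y\}$. A set $S\subseteq X$ is an M-set if every vector in $M(S)$ has norm exactly $1$ and every vector in $S$ has norm strictly greater than $1$. $m(X)$ denotes the largest cardinality of an M-set in $X$ if such a largest finite cardinality exists, and $m(X)=\infty$ otherwise. The norm is smooth if each boundary point of the unit ball has a unique supporting hyperplane, and strictly convex if the unit sphere contains no nondegenerate line segment. *)

(* real numbers. A 4-dimensional Minkowski space is modelled,
   up to linear isometry, as R^4 equipped with an arbitrary norm. *)
From Stdlib Require Import Reals List.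
Open Scope R_scope.

Record V4 : Type := mkV4 { c0 : R; c1 : R; c2 : R; c3 : R }.

Definition vadd (x y : V4) : V4 :=
  mkV4 (c0 x + c0 y) (c1 x + c1 y) (c2 x + c2 y) (c3 x + c3 y).
Definition vscale (t : R) (x : V4) : V4 :=
  mkV4 (t * c0 x) (t * c1 x) (t * c2 x) (t * c3 x).
Definition vzero : V4 := mkV4 0 0 0 0.
Definition dot (a y : V4) : R :=
  c0 a * c0 y + c1 a * c1 y + c2 a * c2 y + c3 a * c3 y.

Definition is_norm (N : V4 -> R) : Prop :=
  (forall x, 0 <= N x) /\
  (forall x, N x = 0 -> x = vzero) /\
  (forall t x, N (vscale t x) = Rabs t * N x) /\
  (forall x y, N (vadd x y) <= N x + N y).

(* The hyperplane {y | dot a y = 1} supports the unit ball at the boundary point x.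
   (Every supporting hyperplane at x is of this form, since 0 is interior.) *)
Definition supporting (N : V4 -> R) (x a : V4) : Prop :=
  dot a x = 1 /\ forall y, N y <= 1 -> dot a y <= 1.

Definition smooth (N : V4 -> R) : Prop :=
  forall x, N x = 1 -> exists a, supporting N x a /\
    forall b, supporting N x b -> b = a.

Definition strictly_convex (N : V4 -> R) : Prop :=
  forall x y, x <> y ->
    ~ (forall t, 0 <= t <= 1 -> N (vadd (vscale (1 - t) x) (vscale t y)) = 1).

Definition midpoint (x y : V4) : V4 := vscale (/ 2) (vadd x y).

Definition M_set (N : V4 -> R) (S : list V4) : Prop :=
  NoDup S /\
  (forall x, In x S -> 1 < N x) /\
  (forall x y, In x S -> In y S -> x <> y -> N (midpoint x y) = 1).

(* Put x_k = (cos t_k, sin t_k, cos 3t_k, sin 3t_k) with t_k = k/m.  All x_k have Euclidean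
   norm sqrt 2, and for each pair p = {i, j} a linear functional u_p equals 1 at x_i and x_j
   and lies in (-1, 1) at the other x_k; hence u_p is 1 at the midpoint z_p of x_i and x_j,
   while |u_q(z_p)| < 1 for q <> p.  The norm is eps |y| + sqrt (Q y), where Q is a smoothed
   maximum of rho |y|^2 and of the squares (kappa_p u_p(y))^2, with kappa_p = 1 - eps |z_p|.
   For a small smoothing parameter the maximum at z_p is the single term of p, so the norm
   is exactly 1 at every midpoint; at x_i it exceeds eps |x_i| + kappa_p > 1 because the
   midpoints are strictly shorter than the x_i.  Q is a supremum of positive semidefinite
   quadratic forms touching it, which makes sqrt Q a seminorm with a unique tangent
   functional at each point; the Euclidean summand makes the norm strictly convex. *)

From Stdlib Require Import Reals List Lra Lia Psatz Classical.
Open Scope R_scope.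

Ltac vec_eq :=
  repeat match goal with v : V4 |- _ => destruct v end;
  unfold midpoint, vadd, vscale, vzero; simpl; f_equal; field; auto.

Definition vsub (x y : V4) : V4 := vadd x (vscale (-1) y).

Lemma dot_comm x y : dot x y = dot y x.
Proof. destruct x, y; unfold dot; simpl; ring. Qed.

Lemma dot_addr x y z : dot x (vadd y z) = dot x y + dot x z.
Proof. destruct x, y, z; unfold dot, vadd; simpl; ring. Qed.

Lemma dot_addl x y z : dot (vadd y z) x = dot y x + dot z x.
Proof. destruct x, y, z; unfold dot, vadd; simpl; ring. Qed.

Lemma dot_scaler x t y : dot x (vscale t y) = t * dot x y.
Proof. destruct x, y; unfold dot, vscale; simpl; ring. Qed.

Lemma dot_scalel x t y : dot (vscale t y) x = t * dot y x.
Proof. destruct x, y; unfold dot, vscale; simpl; ring. Qed.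

Lemma dot_0r x : dot x vzero = 0.
Proof. destruct x; unfold dot, vzero; simpl; ring. Qed.

Lemma dot_self_ge0 x : 0 <= dot x x.
Proof. destruct x; unfold dot; simpl; nra. Qed.

Lemma dot_self_eq0 x : dot x x = 0 -> x = vzero.
Proof.
  destruct x as [a b c d]; unfold dot, vzero; simpl; intro H.
  assert (a = 0) by nra; assert (b = 0) by nra; assert (c = 0) by nra; assert (d = 0) by nra.
  now subst.
Qed.

Lemma vsub_eq0 x y : vsub x y = vzero -> x = y.
Proof.
  destruct x, y; unfold vsub, vadd, vscale, vzero; simpl; intro E; injection E; intros.
  f_equal; lra.
Qed.

Lemma dot_vsub x y :
  dot (vsub x y) (vsub x y) = dot x x - 2 * dot x y + dot y y.
Proof.
  unfold vsub; rewrite !dot_addr, !dot_addl, !dot_scaler, !dot_scalel, (dot_comm y x); ring.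
Qed.

Lemma dot_midpoint x y :
  dot (midpoint x y) (midpoint x y) = (dot x x + dot y y) / 2 - dot (vsub x y) (vsub x y) / 4.
Proof.
  rewrite dot_vsub; unfold midpoint.
  rewrite dot_scaler, dot_scalel, !dot_addr, !dot_addl, (dot_comm y x); field.
Qed.

Lemma midpoint_comm x y : midpoint x y = midpoint y x.
Proof. vec_eq. Qed.

Lemma dot_midpointl u x y : dot u (midpoint x y) = (dot u x + dot u y) / 2.
Proof. unfold midpoint; rewrite dot_scaler, dot_addr; field. Qed.

Definition enorm (x : V4) : R := sqrt (dot x x).

Lemma enorm_ge0 x : 0 <= enorm x.
Proof. apply sqrt_pos. Qed.

Lemma enorm_sq x : enorm x * enorm x = dot x x.
Proof. apply sqrt_sqrt, dot_self_ge0. Qed.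

Lemma enorm_eq0 x : enorm x = 0 -> x = vzero.
Proof. intro H; apply dot_self_eq0; rewrite <- enorm_sq, H; ring. Qed.

Lemma enorm_gt0 x : x <> vzero -> 0 < enorm x.
Proof.
  intro H; destruct (enorm_ge0 x) as [|E]; [easy|].
  now destruct H; apply enorm_eq0.
Qed.

Lemma enorm_vzero : enorm vzero = 0.
Proof. unfold enorm; rewrite dot_0r; apply sqrt_0. Qed.

Lemma enorm_scale t x : enorm (vscale t x) = Rabs t * enorm x.
Proof.
  unfold enorm; rewrite dot_scalel, dot_scaler, <- Rmult_assoc.
  change (t * t) with (Rsqr t); rewrite sqrt_mult_alt, sqrt_Rsqr_abs by apply Rle_0_sqr; ring.
Qed.

Lemma enorm_lt x y : dot x x < dot y y -> enorm x < enorm y.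
Proof. intro; apply sqrt_lt_1; auto using dot_self_ge0. Qed.

(** * Positive semidefinite forms and their suprema *)

Definition psd (A : V4 -> V4 -> R) : Prop :=
  (forall x y, A x y = A y x) /\
  (forall x y z, A x (vadd y z) = A x y + A x z) /\
  (forall x t y, A x (vscale t y) = t * A x y) /\
  (forall x, 0 <= A x x).

Lemma psd_expand A y z t : psd A ->
  A (vadd y (vscale t z)) (vadd y (vscale t z)) = A y y + 2 * t * A y z + t * t * A z z.
Proof.
  intros (Hs & Ha & Hm & _).
  rewrite Ha, Hm, (Hs (vadd y _) y), (Hs (vadd y _) z), !Ha, !Hm, (Hs z y); ring.
Qed.

Lemma psd_scale A t y : psd A -> A (vscale t y) (vscale t y) = t * t * A y y.
Proof. intros (Hs & _ & Hm & _); rewrite Hm, Hs, Hm; ring. Qed.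

Lemma psd_cauchy_schwarz A y z : psd A -> (A y z)^2 <= A y y * A z z.
Proof.
  intro HA; pose proof HA as (_ & _ & _ & Hp).
  destruct (Hp z) as [Hz|Hz].
  - (* minimise the quadratic [t |-> A (y + t z) (y + t z)] at [t = - A y z / A z z] *)
    pose proof (Hp (vadd y (vscale (- A y z / A z z) z))) as H.
    rewrite psd_expand in H by auto.
    replace (A y y + 2 * (- A y z / A z z) * A y z + (- A y z / A z z) * (- A y z / A z z) * A z z)
      with ((A y y * A z z - (A y z)^2) / A z z) in H by (field; lra).
    apply Rmult_le_compat_r with (r := A z z) in H; [|lra].
    unfold Rdiv in H; rewrite Rmult_assoc, Rinv_l, Rmult_0_l in H by lra; lra.
  - rewrite <- Hz, Rmult_0_r.
    destruct (Req_dec (A y z) 0) as [E|E]; [rewrite E; lra|exfalso].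
    pose proof (Hp (vadd y (vscale (- (A y y + 1) / (2 * A y z)) z))) as H.
    rewrite psd_expand, <- Hz in H by auto.
    replace (A y y + 2 * (- (A y y + 1) / (2 * A y z)) * A y z) with (-1) in H by (field; auto).
    lra.
Qed.

Lemma psd_le_sqrt A y z : psd A -> A y z <= sqrt (A y y) * sqrt (A z z).
Proof.
  intro HA; pose proof HA as (_ & _ & _ & Hp).
  rewrite <- sqrt_mult by auto.
  apply Rle_trans with (Rabs (A y z)); [apply Rle_abs|].
  rewrite <- sqrt_Rsqr_abs; apply sqrt_le_1; [apply Rle_0_sqr|apply Rmult_le_pos; apply Hp|].
  pose proof (psd_cauchy_schwarz A y z HA); unfold Rsqr; simpl in *; lra.
Qed.

Lemma dot_psd : psd dot.
Proof. split; [|split; [|split]]; auto using dot_comm, dot_addr, dot_scaler, dot_self_ge0. Qed.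

Lemma abs_dot_le x y : Rabs (dot x y) <= enorm x * enorm y.
Proof.
  unfold enorm; rewrite <- sqrt_mult by apply dot_self_ge0.
  rewrite <- sqrt_Rsqr_abs; apply sqrt_le_1; [apply Rle_0_sqr|apply Rmult_le_pos; apply dot_self_ge0|].
  pose proof (psd_cauchy_schwarz dot x y dot_psd); unfold Rsqr; simpl in *; lra.
Qed.

Definition touching_form (Q : V4 -> R) (x g : V4) (A : V4 -> V4 -> R) : Prop :=
  psd A /\ (forall h, A x h = dot g h) /\ A x x = Q x /\ (forall y, A y y <= Q y).

Definition upper_diff (Q : V4 -> R) (x g : V4) : Prop :=
  forall eta, 0 < eta -> exists r, 0 < r /\ forall h, enorm h <= r ->
    Q (vadd x h) <= Q x + 2 * dot g h + eta * enorm h.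

Definition sup_of_forms (Q : V4 -> R) : Prop :=
  forall x, exists A g, touching_form Q x g A /\ (x <> vzero -> upper_diff Q x g).

Definition pos_def (Q : V4 -> R) : Prop := forall x, x <> vzero -> 0 < Q x.

Lemma sup_of_forms_ge0 Q y : sup_of_forms Q -> 0 <= Q y.
Proof.
  intro HQ; destruct (HQ y) as (A & g & ((_ & _ & _ & Hp) & _ & <- & _) & _); apply Hp.
Qed.

Lemma sup_of_forms_scale Q t y : sup_of_forms Q -> Q (vscale t y) = t * t * Q y.
Proof.
  intro HQ.
  assert (Hle : forall s z, Q (vscale s z) <= s * s * Q z).
  { intros s z; destruct (HQ (vscale s z)) as (A & g & (HA & _ & <- & Hle) & _).
    rewrite psd_scale by auto; apply Rmult_le_compat_l; [apply Rle_0_sqr|apply Hle]. }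
  apply Rle_antisym; [apply Hle|].
  destruct (Req_dec t 0) as [->|Ht].
  - rewrite !Rmult_0_l; apply sup_of_forms_ge0, HQ.
  - pose proof (Hle (/ t) (vscale t y)) as H.
    replace (vscale (/ t) (vscale t y)) with y in H by vec_eq.
    apply Rmult_le_compat_l with (r := t * t) in H; [|nra].
    replace (t * t * (/ t * / t * Q (vscale t y))) with (Q (vscale t y)) in H by (field; auto).
    exact H.
Qed.

Lemma sup_of_forms_vzero Q : sup_of_forms Q -> Q vzero = 0.
Proof.
  intro HQ; replace vzero with (vscale 0 vzero) by vec_eq.
  rewrite sup_of_forms_scale by auto; ring.
Qed.

Lemma touching_form_le Q x g A y :
  touching_form Q x g A -> dot g y <= sqrt (Q x) * sqrt (Q y).
Proof.
  intros (HA & Hg & Hx & Hle); rewrite <- Hg, <- Hx.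
  pose proof HA as (_ & _ & _ & Hp).
  eapply Rle_trans; [apply (psd_le_sqrt A x y HA)|].
  apply Rmult_le_compat_l; [apply sqrt_pos|apply sqrt_le_1; auto].
  specialize (Hp y); specialize (Hle y); lra.
Qed.

Lemma sqrt_sup_of_forms_scale Q t y :
  sup_of_forms Q -> sqrt (Q (vscale t y)) = Rabs t * sqrt (Q y).
Proof.
  intro HQ; rewrite sup_of_forms_scale by auto.
  change (t * t) with (Rsqr t); rewrite sqrt_mult_alt, sqrt_Rsqr_abs by apply Rle_0_sqr; ring.
Qed.

Lemma sqrt_sup_of_forms_triangle Q y z :
  sup_of_forms Q -> sqrt (Q (vadd y z)) <= sqrt (Q y) + sqrt (Q z).
Proof.
  intro HQ; set (w := vadd y z).
  destruct (HQ w) as (A & g & Hw & _).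
  pose proof Hw as ((_ & Ha & _) & Hg & Hx & _).
  assert (Hsq : sqrt (Q w) * sqrt (Q w) <= sqrt (Q w) * (sqrt (Q y) + sqrt (Q z))).
  { (* [Q w = A w y + A w z], and each term is bounded through the form touching at [w] *)
    rewrite sqrt_sqrt by apply (sup_of_forms_ge0 _ _ HQ).
    rewrite <- Hx at 1; unfold w at 2; rewrite Ha, !Hg, Rmult_plus_distr_l.
    apply Rplus_le_compat; apply (touching_form_le Q w g A); auto. }
  destruct (sqrt_pos (Q w)) as [Hpos|Hzero].
  - apply Rmult_le_reg_l with (sqrt (Q w)); auto.
  - rewrite <- Hzero; apply Rplus_le_le_0_compat; apply sqrt_pos.
Qed.

Lemma quadratic_sup_of_forms Q A G C : psd A -> 0 <= C ->
  (forall y, Q y = A y y) -> (forall x h, A x h = dot (G x) h) ->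
  (forall h, A h h <= C * dot h h) -> sup_of_forms Q.
Proof.
  intros HA HC HQ HG Hbd x.
  pose proof HA as (Hs & Ha & _).
  exists A, (G x); split.
  { split; [exact HA|split; [auto|split; [symmetry; apply HQ|intro y; rewrite HQ; lra]]]. }
  intros _ eta Heta; exists (eta / (C + 1)); split; [apply Rdiv_lt_0_compat; lra|].
  intros h Hh; rewrite !HQ, <- HG.
  replace (A (vadd x h) (vadd x h)) with (A x x + 2 * A x h + A h h)
    by (rewrite Ha, (Hs (vadd x h) x), (Hs (vadd x h) h), !Ha, (Hs h x); ring).
  assert (Hch : C * enorm h <= eta).
  { apply Rle_trans with ((C + 1) * enorm h); [pose proof (enorm_ge0 h); nra|].
    apply Rmult_le_reg_r with (/ (C + 1)); [apply Rinv_0_lt_compat; lra|].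
    replace ((C + 1) * enorm h * / (C + 1)) with (enorm h) by (field; lra); exact Hh. }
  pose proof (Hbd h); rewrite <- enorm_sq in *; pose proof (enorm_ge0 h); nra.
Qed.

Lemma sq_dot_sup_of_forms v : sup_of_forms (fun y => dot v y * dot v y).
Proof.
  apply (quadratic_sup_of_forms _ (fun y z => dot v y * dot v z)
           (fun x => vscale (dot v x) v) (dot v v)); auto using dot_self_ge0.
  - repeat split; intros; rewrite ?dot_addr, ?dot_scaler; try ring; apply Rle_0_sqr.
  - intros; rewrite dot_scalel; ring.
  - intro h; pose proof (abs_dot_le v h); pose proof (Rabs_pos (dot v h)).
    pose proof (enorm_ge0 v); pose proof (enorm_ge0 h).
    rewrite <- (enorm_sq v), <- (enorm_sq h).
    replace (dot v h * dot v h) with (Rabs (dot v h) * Rabs (dot v h))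
      by (rewrite <- Rabs_mult; apply Rabs_pos_eq, Rle_0_sqr).
    nra.
Qed.

Lemma scaled_dot_sup_of_forms rho : 0 <= rho -> sup_of_forms (fun y => rho * dot y y).
Proof.
  intro Hrho.
  apply (quadratic_sup_of_forms _ (fun y z => rho * dot y z) (vscale rho) rho); auto.
  - repeat split; intros; rewrite ?dot_addr, ?dot_scaler, 1?dot_comm; try ring.
    apply Rmult_le_pos; auto using dot_self_ge0.
  - intros; rewrite dot_scalel; ring.
  - intro; lra.
Qed.

Lemma scaled_dot_pos_def rho : 0 < rho -> pos_def (fun y => rho * dot y y).
Proof.
  intros Hrho x Hx; rewrite <- enorm_sq; pose proof (enorm_gt0 x Hx).
  apply Rmult_lt_0_compat; nra.
Qed.

Lemma enorm_triangle x y : enorm (vadd x y) <= enorm x + enorm y.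
Proof.
  pose proof (sqrt_sup_of_forms_triangle (fun z => 1 * dot z z) x y) as H.
  cbv beta in H; unfold enorm; rewrite !Rmult_1_l in H; apply H, scaled_dot_sup_of_forms; lra.
Qed.

(** * A smooth maximum of two nonnegative numbers *)

(* [smax d a b] is the maximum over [c] in [[-1, 1]] of [alpha d c * a + beta d c * b]; it is
   attained at [c = smax_arg d a b] (lemma [smax_at_le]).  Being a maximum of nonnegative
   combinations of [a] and [b], it preserves suprema of forms; it equals [Rmax a b] as soon as
   the ratio of [a] and [b] exceeds [(1 + d) / (1 - d)], and the bump [d (1 - c^2)] makes the
   maximiser depend continuously on [(a, b)], which is what makes [smax] smooth. *)

Definition clip (z : R) : R := Rmax (-1) (Rmin 1 z).
Definition alpha (d c : R) : R := (1 + c) / 2 + d * (1 - c * c) / 4.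
Definition beta (d c : R) : R := (1 - c) / 2 + d * (1 - c * c) / 4.
Definition smax_at (d a b c : R) : R := alpha d c * a + beta d c * b.
Definition smax_arg (d a b : R) : R := clip ((a - b) / (d * (a + b))).
Definition smax (d a b : R) : R := smax_at d a b (smax_arg d a b).

Lemma clip_cases z :
  (clip z = z /\ -1 <= z <= 1) \/ (clip z = 1 /\ 1 <= z) \/ (clip z = -1 /\ z <= -1).
Proof. unfold clip, Rmax, Rmin; repeat destruct Rle_dec; lra. Qed.

Lemma smax_arg_range d a b : -1 <= smax_arg d a b <= 1.
Proof. unfold smax_arg; destruct (clip_cases ((a - b) / (d * (a + b)))); lra. Qed.

Lemma alpha_ge0 d c : 0 <= d -> -1 <= c <= 1 -> 0 <= alpha d c.
Proof. intros; unfold alpha; assert (0 <= d * (1 - c * c)) by (apply Rmult_le_pos; nra); lra. Qed.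

Lemma beta_ge0 d c : 0 <= d -> -1 <= c <= 1 -> 0 <= beta d c.
Proof. intros; unfold beta; assert (0 <= d * (1 - c * c)) by (apply Rmult_le_pos; nra); lra. Qed.

Lemma alpha_beta_le d c : 0 <= d -> -1 <= c <= 1 -> alpha d c + beta d c <= 1 + d.
Proof. intros; unfold alpha, beta; nra. Qed.

Lemma smax_at_le d a b c : 0 < d -> 0 <= a -> 0 <= b -> -1 <= c <= 1 ->
  smax_at d a b c <= smax d a b - d * (a + b) / 4 * (c - smax_arg d a b)^2.
Proof.
  intros Hd Ha Hb Hc; unfold smax; set (cs := smax_arg d a b).
  (* [smax_at] is quadratic in [c], with vertex at the unclipped argument *)
  replace (smax_at d a b cs - d * (a + b) / 4 * (c - cs)^2)
    with (smax_at d a b c + (cs - c) * ((a - b) - d * (a + b) * cs) / 2)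
    by (unfold smax_at, alpha, beta; field).
  enough (0 <= (cs - c) * ((a - b) - d * (a + b) * cs)) by lra.
  destruct (Req_dec (a + b) 0) as [Hab|Hab].
  - replace (a - b - d * (a + b) * cs) with 0 by nra; lra.
  - assert (Hdab : 0 < d * (a + b)) by (apply Rmult_lt_0_compat; lra).
    set (z := (a - b) / (d * (a + b))).
    replace (a - b) with (z * (d * (a + b))) by (unfold z; field; lra).
    unfold cs, smax_arg; fold z.
    set (D := d * (a + b)) in *; clearbody z D cs.
    destruct (clip_cases z) as [(-> & _)|[(-> & Hz)|(-> & Hz)]].
    + replace (z * D - D * z) with 0 by ring; lra.
    + apply Rmult_le_pos; [lra|]; nra.
    + replace ((-1 - c) * (z * D - D * -1)) with ((1 + c) * (- (z * D) - D)) by ring.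
      apply Rmult_le_pos; [lra|]; nra.
Qed.

Lemma smax_ge_l d a b : 0 < d -> 0 <= a -> 0 <= b -> a <= smax d a b.
Proof.
  intros; pose proof (smax_at_le d a b 1 ltac:(lra) ltac:(lra) ltac:(lra) ltac:(lra)).
  replace (smax_at d a b 1) with a in H2 by (unfold smax_at, alpha, beta; field).
  assert (0 <= d * (a + b) / 4 * (1 - smax_arg d a b)^2)
    by (apply Rmult_le_pos; [apply Rmult_le_pos; nra|apply pow2_ge_0]).
  lra.
Qed.

Lemma smax_ge_r d a b : 0 < d -> 0 <= a -> 0 <= b -> b <= smax d a b.
Proof.
  intros; pose proof (smax_at_le d a b (-1) ltac:(lra) ltac:(lra) ltac:(lra) ltac:(lra)).
  replace (smax_at d a b (-1)) with b in H2 by (unfold smax_at, alpha, beta; field).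
  assert (0 <= d * (a + b) / 4 * (-1 - smax_arg d a b)^2)
    by (apply Rmult_le_pos; [apply Rmult_le_pos; nra|apply pow2_ge_0]).
  lra.
Qed.

Lemma smax_le d a b m : 0 < d -> 0 <= a -> 0 <= b -> a <= m -> b <= m ->
  smax d a b <= (1 + d) * m.
Proof.
  intros; unfold smax, smax_at; pose proof (smax_arg_range d a b) as Hc.
  set (c := smax_arg d a b) in *.
  pose proof (alpha_ge0 d c ltac:(lra) Hc); pose proof (beta_ge0 d c ltac:(lra) Hc).
  pose proof (alpha_beta_le d c ltac:(lra) Hc).
  assert (alpha d c * a <= alpha d c * m) by (apply Rmult_le_compat_l; auto).
  assert (beta d c * b <= beta d c * m) by (apply Rmult_le_compat_l; auto).
  nra.
Qed.

Lemma smax_eq_l d a b : 0 < d -> 0 <= a -> 0 <= b -> b * (1 + d) <= a * (1 - d) ->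
  smax d a b = a.
Proof.
  intros; unfold smax, smax_arg.
  destruct (Req_dec (a + b) 0) as [Hab|Hab].
  - assert (a = 0) by lra; assert (b = 0) by lra; subst; unfold smax_at; ring.
  - assert (1 <= (a - b) / (d * (a + b))).
    { assert (0 < d * (a + b)) by nra.
      apply Rmult_le_reg_r with (d * (a + b)); auto.
      replace ((a - b) / (d * (a + b)) * (d * (a + b))) with (a - b) by (field; lra); lra. }
    destruct (clip_cases ((a - b) / (d * (a + b)))) as [(-> & ?)|[(-> & ?)|(-> & ?)]];
      [replace ((a - b) / (d * (a + b))) with 1 by lra| |lra];
      unfold smax_at, alpha, beta; field.
Qed.

Lemma smax_eq_r d a b : 0 < d -> 0 <= a -> 0 <= b -> a * (1 + d) <= b * (1 - d) ->
  smax d a b = b.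
Proof.
  intros; unfold smax, smax_arg.
  destruct (Req_dec (a + b) 0) as [Hab|Hab].
  - assert (a = 0) by lra; assert (b = 0) by lra; subst; unfold smax_at; ring.
  - assert ((a - b) / (d * (a + b)) <= -1).
    { assert (0 < d * (a + b)) by nra.
      apply Rmult_le_reg_r with (d * (a + b)); auto.
      replace ((a - b) / (d * (a + b)) * (d * (a + b))) with (a - b) by (field; lra); lra. }
    destruct (clip_cases ((a - b) / (d * (a + b)))) as [(-> & ?)|[(-> & ?)|(-> & ?)]];
      [replace ((a - b) / (d * (a + b))) with (-1) by lra| lra|];
      unfold smax_at, alpha, beta; field.
Qed.

Lemma weights_lipschitz d c c' : 0 <= d <= 1 -> -1 <= c <= 1 -> -1 <= c' <= 1 ->
  Rabs (alpha d c' - alpha d c) <= Rabs (c' - c) /\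
  Rabs (beta d c' - beta d c) <= Rabs (c' - c).
Proof.
  intros; assert (Hs : - 2 * d <= d * (c' + c) <= 2 * d) by nra.
  replace (alpha d c' - alpha d c) with ((c' - c) * (1/2 - d * (c' + c) / 4))
    by (unfold alpha; field).
  replace (beta d c' - beta d c) with ((c' - c) * (- 1/2 - d * (c' + c) / 4))
    by (unfold beta; field).
  rewrite !Rabs_mult; pose proof (Rabs_pos (c' - c)).
  split; rewrite <- (Rmult_1_r (Rabs (c' - c))) at 2; apply Rmult_le_compat_l; auto;
    apply Rabs_le; lra.
Qed.

(* First-order behaviour of [smax]: the two weights at [(a, b)] act as its derivative, and the
   error is quadratic in the perturbation thanks to the strict concavity in [smax_at_le]. *)
Lemma smax_upper d a b a' b' La Lb e : 0 < d < 1 -> 0 <= a -> 0 <= b -> 0 < a + b ->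
  0 <= a' -> 0 <= b' -> 0 <= e -> a' <= a + La + e -> b' <= b + Lb + e ->
  smax d a' b' <= smax d a b + alpha d (smax_arg d a b) * La + beta d (smax_arg d a b) * Lb
                  + (Rabs La + Rabs Lb)^2 / (d * (a + b)) + 2 * e.
Proof.
  intros Hd Ha Hb Hab Ha' Hb' He Hla Hlb.
  pose proof (smax_arg_range d a b) as Hc; pose proof (smax_arg_range d a' b') as Hc'.
  set (c := smax_arg d a b) in *; set (c' := smax_arg d a' b') in *.
  pose proof (alpha_ge0 d c' ltac:(lra) Hc'); pose proof (beta_ge0 d c' ltac:(lra) Hc').
  pose proof (alpha_beta_le d c' ltac:(lra) Hc').
  pose proof (smax_at_le d a b c' ltac:(lra) Ha Hb Hc') as Hpeak; fold c in Hpeak.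
  destruct (weights_lipschitz d c c' ltac:(lra) Hc Hc') as (Hda & Hdb).
  set (u := Rabs (c' - c)) in *; set (B := Rabs La + Rabs Lb); set (k := d * (a + b) / 4).
  assert (Hk : 0 < k) by (unfold k; nra).
  assert (Hsm : smax d a' b' <= alpha d c' * (a + La + e) + beta d c' * (b + Lb + e)).
  { unfold smax, smax_at; fold c'; apply Rplus_le_compat; apply Rmult_le_compat_l; auto. }
  assert (Hdev : (alpha d c' - alpha d c) * La + (beta d c' - beta d c) * Lb <= u * B).
  { unfold B; rewrite Rmult_plus_distr_l.
    apply Rplus_le_compat; eapply Rle_trans; try apply Rle_abs;
      rewrite Rabs_mult; apply Rmult_le_compat_r; auto using Rabs_pos. }
  assert (Hamgm : - k * u^2 + u * B <= B^2 / (d * (a + b))).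
  { assert (B^2 / (d * (a + b)) - (- k * u^2 + u * B) = (2 * k * u - B)^2 / (4 * k))
      by (unfold k; field; lra).
    assert (0 <= (2 * k * u - B)^2 / (4 * k)) by (apply Rmult_le_pos; [apply pow2_ge_0|
      left; apply Rinv_0_lt_compat; lra]); lra. }
  replace ((c' - c)^2) with (u^2) in Hpeak by (unfold u; now rewrite pow2_abs).
  fold k in Hpeak; unfold smax_at in Hpeak.
  assert ((alpha d c' + beta d c') * e <= 2 * e) by (apply Rmult_le_compat_r; lra).
  clearbody u B k c c'; nra.
Qed.

Section SmaxForms.

Variables (d : R) (Q1 Q2 : V4 -> R).
Hypotheses (Hd : 0 < d < 1) (HQ1 : sup_of_forms Q1) (HQ2 : sup_of_forms Q2).

Let Q y := smax d (Q1 y) (Q2 y).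

Lemma touching_form_smax x g1 g2 A1 A2 :
  touching_form Q1 x g1 A1 -> touching_form Q2 x g2 A2 ->
  let c := smax_arg d (Q1 x) (Q2 x) in
  touching_form Q x (vadd (vscale (alpha d c) g1) (vscale (beta d c) g2))
    (fun y z => alpha d c * A1 y z + beta d c * A2 y z).
Proof.
  intros ((S1 & D1 & M1 & P1) & G1 & X1 & L1) ((S2 & D2 & M2 & P2) & G2 & X2 & L2) c.
  pose proof (smax_arg_range d (Q1 x) (Q2 x)) as Hc; fold c in Hc.
  pose proof (alpha_ge0 d c ltac:(lra) Hc); pose proof (beta_ge0 d c ltac:(lra) Hc).
  split; [split; [|split; [|split]]|split; [|split]].
  - intros; rewrite S1, S2; ring.
  - intros; rewrite D1, D2; ring.
  - intros; rewrite M1, M2; ring.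
  - intro y; pose proof (P1 y); pose proof (P2 y); nra.
  - intro h; rewrite dot_addl, !dot_scalel, G1, G2; ring.
  - rewrite X1, X2; reflexivity.
  - intro y; pose proof (sup_of_forms_ge0 Q1 y HQ1); pose proof (sup_of_forms_ge0 Q2 y HQ2).
    pose proof (smax_at_le d (Q1 y) (Q2 y) c ltac:(lra) H1 H2 Hc) as Hpeak.
    assert (0 <= d * (Q1 y + Q2 y) / 4 * (c - smax_arg d (Q1 y) (Q2 y))^2)
      by (apply Rmult_le_pos; [apply Rmult_le_pos; nra|apply pow2_ge_0]).
    unfold smax_at in Hpeak; unfold Q.
    pose proof (L1 y); pose proof (L2 y); nra.
Qed.

Lemma upper_diff_smax x g1 g2 : 0 < Q2 x -> upper_diff Q1 x g1 -> upper_diff Q2 x g2 ->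
  let c := smax_arg d (Q1 x) (Q2 x) in
  upper_diff Q x (vadd (vscale (alpha d c) g1) (vscale (beta d c) g2)).
Proof.
  intros Hpos U1 U2 c eta Heta.
  pose proof (sup_of_forms_ge0 Q1 x HQ1) as Ha.
  set (G := enorm g1 + enorm g2 + 1).
  assert (HG : 1 <= G) by (unfold G; pose proof (enorm_ge0 g1); pose proof (enorm_ge0 g2); lra).
  set (D := d * (Q1 x + Q2 x)).
  assert (HD : 0 < D) by (unfold D; apply Rmult_lt_0_compat; lra).
  set (r3 := eta * D / (8 * G * G)).
  assert (Hr3 : 0 < r3) by (unfold r3; apply Rdiv_lt_0_compat; nra).
  destruct (U1 (eta / 8) ltac:(lra)) as (r1 & Hr1 & B1).
  destruct (U2 (eta / 8) ltac:(lra)) as (r2 & Hr2 & B2).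
  exists (Rmin r1 (Rmin r2 r3)); split; [repeat apply Rmin_glb_lt; auto|].
  intros h Hh.
  pose proof (Rle_trans _ _ _ Hh (Rmin_l _ _)) as h1.
  pose proof (Rle_trans _ _ _ Hh (Rle_trans _ _ _ (Rmin_r _ _) (Rmin_l _ _))) as h2.
  pose proof (Rle_trans _ _ _ Hh (Rle_trans _ _ _ (Rmin_r _ _) (Rmin_r _ _))) as h3.
  pose proof (enorm_ge0 h) as Hh0.
  pose proof (smax_upper d (Q1 x) (Q2 x) (Q1 (vadd x h)) (Q2 (vadd x h))
    (2 * dot g1 h) (2 * dot g2 h) (eta / 8 * enorm h) Hd Ha ltac:(lra) ltac:(lra)
    (sup_of_forms_ge0 _ _ HQ1) (sup_of_forms_ge0 _ _ HQ2) ltac:(nra) (B1 h h1) (B2 h h2)) as Hup.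
  fold c D in Hup.
  assert (HB : Rabs (2 * dot g1 h) + Rabs (2 * dot g2 h) <= 2 * G * enorm h).
  { rewrite !Rabs_mult, Rabs_pos_eq by lra.
    pose proof (abs_dot_le g1 h); pose proof (abs_dot_le g2 h); unfold G; nra. }
  assert (Hquad : (Rabs (2 * dot g1 h) + Rabs (2 * dot g2 h))^2 / D <= eta / 2 * enorm h).
  { apply Rmult_le_reg_r with D; auto.
    replace ((Rabs (2 * dot g1 h) + Rabs (2 * dot g2 h))^2 / D * D)
      with ((Rabs (2 * dot g1 h) + Rabs (2 * dot g2 h))^2) by (field; lra).
    apply Rle_trans with ((2 * G * enorm h)^2).
    { apply pow_incr; split; auto; apply Rplus_le_le_0_compat; apply Rabs_pos. }
    assert (8 * G * G * enorm h <= eta * D).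
    { apply Rmult_le_reg_r with (/ (8 * G * G)); [apply Rinv_0_lt_compat; nra|].
      replace (8 * G * G * enorm h * / (8 * G * G)) with (enorm h) by (field; lra).
      exact h3. }
    nra. }
  rewrite dot_addl, !dot_scalel; unfold Q; clearbody c D G; nra.
Qed.

Lemma smax_sup_of_forms : pos_def Q2 -> sup_of_forms Q.
Proof.
  intros P2 x.
  destruct (HQ1 x) as (A1 & g1 & T1 & U1); destruct (HQ2 x) as (A2 & g2 & T2 & U2).
  eexists; eexists; split; [apply (touching_form_smax x g1 g2 A1 A2 T1 T2)|].
  intro Hx; apply upper_diff_smax; auto.
Qed.

Lemma smax_pos_def : pos_def Q2 -> pos_def Q.
Proof.
  intros P2 x Hx; pose proof (P2 x Hx); pose proof (sup_of_forms_ge0 Q1 x HQ1).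
  pose proof (smax_ge_r d (Q1 x) (Q2 x) ltac:(lra) H0 ltac:(lra)); unfold Q; lra.
Qed.

End SmaxForms.

(** * Tangent functionals and the norm [eps |x| + sqrt (Q x)] *)

Definition tangent_functional (f : V4 -> R) (x a : V4) : Prop :=
  dot a x = f x /\ (forall y, dot a y <= f y) /\
  forall eta, 0 < eta -> exists r, 0 < r /\ forall h, enorm h <= r ->
    f (vadd x h) <= f x + dot a h + eta * enorm h.

Lemma tangent_functional_ext f g x a :
  (forall y, f y = g y) -> tangent_functional f x a -> tangent_functional g x a.
Proof.
  intros E (H1 & H2 & H3); split; [|split].
  - now rewrite <- E.
  - intro; rewrite <- E; auto.
  - intros eta Heta; destruct (H3 eta Heta) as (r & Hr & H); exists r; split; auto.
    intros; rewrite <- !E; auto.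
Qed.

Lemma tangent_functional_comb eps f g x a b : 0 <= eps ->
  tangent_functional f x a -> tangent_functional g x b ->
  tangent_functional (fun y => eps * f y + g y) x (vadd (vscale eps a) b).
Proof.
  intros He (Fa & Fb & Fc) (Ga & Gb & Gc); split; [|split].
  - rewrite dot_addl, dot_scalel, Fa, Ga; ring.
  - intro y; rewrite dot_addl, dot_scalel; pose proof (Fb y); pose proof (Gb y); nra.
  - intros eta Heta.
    destruct (Fc (eta / (2 * (eps + 1)))) as (r1 & Hr1 & B1); [apply Rdiv_lt_0_compat; lra|].
    destruct (Gc (eta / 2)) as (r2 & Hr2 & B2); [lra|].
    exists (Rmin r1 r2); split; [apply Rmin_glb_lt; auto|].
    intros h Hh; pose proof (B1 h (Rle_trans _ _ _ Hh (Rmin_l _ _))).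
    pose proof (B2 h (Rle_trans _ _ _ Hh (Rmin_r _ _))); pose proof (enorm_ge0 h).
    rewrite dot_addl, dot_scalel.
    assert (eps * (eta / (2 * (eps + 1)) * enorm h) <= eta / 2 * enorm h).
    { replace (eps * (eta / (2 * (eps + 1)) * enorm h))
        with (eps / (eps + 1) * (eta / 2 * enorm h)) by (field; lra).
      rewrite <- (Rmult_1_l (eta / 2 * enorm h)) at 2.
      apply Rmult_le_compat_r; [nra|].
      apply Rmult_le_reg_r with (eps + 1); [lra|].
      replace (eps / (eps + 1) * (eps + 1)) with eps by (field; lra); lra. }
    nra.
Qed.

Lemma sqrt_le_linear A D : 0 < A -> 0 <= A + D -> sqrt (A + D) <= sqrt A + D / (2 * sqrt A).
Proof.
  intros HA HAD; pose proof (sqrt_lt_R0 A HA) as Hs; pose proof (sqrt_sqrt A (Rlt_le _ _ HA)) as Ss.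
  assert (Hrhs : 0 <= sqrt A + D / (2 * sqrt A)).
  { replace (sqrt A + D / (2 * sqrt A))
      with ((sqrt A * sqrt A + (sqrt A * sqrt A + D)) / (2 * sqrt A)) by (field; lra).
    rewrite Ss; apply Rmult_le_pos; [lra|left; apply Rinv_0_lt_compat; lra]. }
  rewrite <- (sqrt_pow2 _ Hrhs); apply sqrt_le_1; [lra|apply pow2_ge_0|].
  replace ((sqrt A + D / (2 * sqrt A))^2)
    with (sqrt A * sqrt A + D + (D / (2 * sqrt A))^2) by (field; lra).
  rewrite Ss.
  pose proof (pow2_ge_0 (D / (2 * sqrt A))); lra.
Qed.

Lemma tangent_functional_sqrt Q x : sup_of_forms Q -> x <> vzero -> 0 < Q x ->
  exists a, tangent_functional (fun y => sqrt (Q y)) x a.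
Proof.
  intros HQ Hx Hpos; destruct (HQ x) as (A & g & T & U); specialize (U Hx).
  pose proof T as (_ & Hg & HAx & _).
  set (m := sqrt (Q x)); assert (Hm : 0 < m) by (apply sqrt_lt_R0; auto).
  assert (Hmm : m * m = Q x) by (apply sqrt_sqrt; lra).
  exists (vscale (/ m) g); split; [|split].
  - cbv beta; fold m; rewrite dot_scalel, <- Hg, HAx, <- Hmm; field; lra.
  - intro y; rewrite dot_scalel; apply Rmult_le_reg_l with m; auto.
    replace (m * (/ m * dot g y)) with (dot g y) by (field; lra).
    apply (touching_form_le Q x g A y T).
  - intros eta Heta; destruct (U (2 * m * eta)) as (r & Hr & Hb); [nra|].
    exists r; split; auto; intros h Hh.
    pose proof (sup_of_forms_ge0 Q (vadd x h) HQ); pose proof (Hb h Hh).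
    cbv beta; fold m.
    apply Rle_trans with (sqrt (m * m + (2 * dot g h + 2 * m * eta * enorm h))).
    { apply sqrt_le_1; lra. }
    eapply Rle_trans; [apply sqrt_le_linear; nra|].
    rewrite sqrt_square, dot_scalel by lra; apply Req_le; field; lra.
Qed.

Lemma tangent_functional_enorm x : x <> vzero -> exists a, tangent_functional enorm x a.
Proof.
  intro Hx; destruct (tangent_functional_sqrt (fun y => 1 * dot y y) x) as (a & Ha); auto.
  { apply scaled_dot_sup_of_forms; lra. }
  { apply scaled_dot_pos_def; auto; lra. }
  exists a; revert Ha; apply tangent_functional_ext.
  intro y; unfold enorm; now rewrite Rmult_1_l.
Qed.

Lemma supporting_le_norm N x b y : is_norm N -> supporting N x b -> dot b y <= N y.
Proof.
  intros (N0 & N1 & Ns & _) (_ & Hb).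
  destruct (classic (y = vzero)) as [->|Hy]; [rewrite dot_0r; apply N0|].
  assert (Hpos : 0 < N y) by (destruct (N0 y) as [|E]; [easy|now destruct Hy; apply N1]).
  pose proof (Hb (vscale (/ N y) y)) as H.
  rewrite Ns, Rabs_pos_eq, Rinv_l, dot_scaler in H by (try apply Rlt_le, Rinv_0_lt_compat; lra).
  specialize (H (Rle_refl 1)).
  apply Rmult_le_compat_l with (r := N y) in H; [|lra].
  rewrite <- Rmult_assoc, Rinv_r, Rmult_1_l, Rmult_1_r in H by lra; exact H.
Qed.

Lemma tangent_functional_supporting N x a :
  N x = 1 -> tangent_functional N x a -> supporting N x a.
Proof.
  intros Hx (Ha & Hle & _); split; [congruence|]; intros y Hy; pose proof (Hle y); lra.
Qed.

(* A supporting functional [b] at [x] lies below [N], while [N] lies below the tangent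
   functional [a] up to [o(h)]; testing on [h] parallel to [b - a] forces [b = a]. *)
Lemma tangent_functional_supporting_unique N x a b : is_norm N -> N x = 1 ->
  tangent_functional N x a -> supporting N x b -> b = a.
Proof.
  intros HN Hx (_ & _ & Ha) Hb.
  set (w := vsub b a).
  assert (Hw : forall eta, 0 < eta -> enorm w <= eta).
  { intros eta Heta; destruct (Ha eta Heta) as (r & Hr & Hup).
    pose proof (enorm_ge0 w) as Hw0.
    set (t := r / (enorm w + 1)); assert (Ht : 0 < t) by (apply Rdiv_lt_0_compat; lra).
    assert (Htw : t * enorm w <= r).
    { apply Rmult_le_reg_r with (enorm w + 1); [lra|].
      unfold t; replace (r / (enorm w + 1) * enorm w * (enorm w + 1)) with (r * enorm w)
        by (field; lra); nra. }
    set (h := vscale t w).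
    assert (Hh : enorm h = t * enorm w) by (unfold h; rewrite enorm_scale, Rabs_pos_eq; lra).
    pose proof (Hup h ltac:(lra)) as H1.
    pose proof (supporting_le_norm N x b (vadd x h) HN Hb) as H2.
    destruct Hb as (Hbx & _); rewrite dot_addr, Hbx in H2; rewrite Hx in H1.
    assert (Hwh : dot b h - dot a h = t * (enorm w * enorm w)).
    { unfold h, w, vsub; rewrite enorm_sq; destruct a, b; unfold dot, vadd, vscale; simpl; ring. }
    rewrite Hh in H1; clearbody h w t.
    assert (t * (enorm w * (enorm w - eta)) <= 0) by nra.
    destruct Hw0 as [Hw0|<-]; [|lra].
    assert (enorm w * (enorm w - eta) <= 0) by nra.
    nra. }
  apply vsub_eq0, enorm_eq0.
  destruct (enorm_ge0 w) as [Hpos|]; [|easy].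
  pose proof (Hw (enorm w / 2) ltac:(lra)); lra.
Qed.

Definition mnorm (eps : R) (Q : V4 -> R) (x : V4) : R := eps * enorm x + sqrt (Q x).

Lemma mnorm_is_norm eps Q : 0 < eps -> sup_of_forms Q -> is_norm (mnorm eps Q).
Proof.
  intros He HQ; unfold mnorm; split; [|split; [|split]].
  - intro x; pose proof (enorm_ge0 x); pose proof (sqrt_pos (Q x)); nra.
  - intros x Hx; pose proof (enorm_ge0 x); pose proof (sqrt_pos (Q x)).
    apply enorm_eq0; nra.
  - intros t x; rewrite enorm_scale, sqrt_sup_of_forms_scale by auto; ring.
  - intros x y; pose proof (enorm_triangle x y); pose proof (sqrt_sup_of_forms_triangle Q x y HQ).
    nra.
Qed.

Lemma mnorm_smooth eps Q : 0 < eps -> sup_of_forms Q -> pos_def Q -> smooth (mnorm eps Q).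
Proof.
  intros He HQ HP x Hx.
  assert (Hx0 : x <> vzero).
  { intros ->; unfold mnorm in Hx.
    rewrite enorm_vzero, sup_of_forms_vzero, sqrt_0 in Hx by auto; lra. }
  destruct (tangent_functional_enorm x Hx0) as (a1 & Ha1).
  destruct (tangent_functional_sqrt Q x HQ Hx0 (HP x Hx0)) as (a2 & Ha2).
  pose proof (tangent_functional_comb eps _ _ x a1 a2 ltac:(lra) Ha1 Ha2) as Ha.
  exists (vadd (vscale eps a1) a2); split; [apply tangent_functional_supporting; auto|].
  intros b Hb; apply (tangent_functional_supporting_unique (mnorm eps Q) x); auto.
  apply mnorm_is_norm; auto.
Qed.

Lemma enorm_triangle_eq x y : enorm (vadd x y) = enorm x + enorm y ->
  vscale (enorm y) x = vscale (enorm x) y.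
Proof.
  intro E.
  assert (Dxy : dot x y = enorm x * enorm y).
  { assert (H : enorm (vadd x y) * enorm (vadd x y) = (enorm x + enorm y) * (enorm x + enorm y))
      by now rewrite E.
    rewrite enorm_sq, dot_addr, !dot_addl, <- (enorm_sq x), <- (enorm_sq y), (dot_comm y x) in H.
    lra. }
  apply vsub_eq0, dot_self_eq0.
  rewrite dot_vsub, !dot_scalel, !dot_scaler, Dxy, <- (enorm_sq x),
    <- (enorm_sq y); ring.
Qed.

Lemma norm_on_segment N x y : is_norm N ->
  (forall t, 0 <= t <= 1 -> N (vadd (vscale (1 - t) x) (vscale t y)) = 1) ->
  N x = 1 /\ N y = 1 /\ N (vadd x y) = 2.
Proof.
  intros (_ & _ & Ns & _) Hs; split; [|split].
  - rewrite <- (Hs 0) by lra; f_equal; vec_eq.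
  - rewrite <- (Hs 1) by lra; f_equal; vec_eq.
  - pose proof (Hs (1 / 2) ltac:(lra)) as H.
    replace (vadd (vscale (1 - 1 / 2) x) (vscale (1 / 2) y)) with (vscale (1 / 2) (vadd x y))
      in H by vec_eq.
    rewrite Ns, Rabs_pos_eq in H by lra; lra.
Qed.

Lemma mnorm_strictly_convex eps Q : 0 < eps -> sup_of_forms Q -> strictly_convex (mnorm eps Q).
Proof.
  intros He HQ x y Hxy Hseg.
  pose proof (mnorm_is_norm eps Q He HQ) as HN; pose proof HN as (_ & _ & Ns & _).
  destruct (norm_on_segment _ x y HN Hseg) as (Nx & Ny & Nxy).
  assert (E : enorm (vadd x y) = enorm x + enorm y).
  { pose proof (enorm_triangle x y); pose proof (sqrt_sup_of_forms_triangle Q x y HQ).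
    unfold mnorm in *; apply Rle_antisym; auto; apply Rmult_le_reg_l with eps; lra. }
  pose proof (enorm_triangle_eq x y E) as Hpar.
  assert (Hx0 : x <> vzero).
  { intros ->; unfold mnorm in Nx.
    rewrite enorm_vzero, sup_of_forms_vzero, sqrt_0 in Nx by auto; lra. }
  pose proof (enorm_gt0 x Hx0); pose proof (enorm_ge0 y).
  assert (Eq : enorm y = enorm x).
  { assert (Hn : mnorm eps Q (vscale (enorm y) x) = mnorm eps Q (vscale (enorm x) y))
      by now rewrite Hpar.
    rewrite !Ns, !Rabs_pos_eq, Nx, Ny in Hn by lra; lra. }
  apply Hxy; rewrite Eq in Hpar; set (n := enorm x) in *; clearbody n.
  destruct x, y; unfold vscale in Hpar; injection Hpar; intros.
  f_equal; apply Rmult_eq_reg_l with n; lra.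
Qed.

Fixpoint smax_list (d rho : R) (vs : list V4) : V4 -> R :=
  match vs with
  | nil => fun y => rho * dot y y
  | v :: vs' => fun y => smax d (dot v y * dot v y) (smax_list d rho vs' y)
  end.

Section SmaxList.

Variables (d rho : R).
Hypotheses (Hd : 0 < d < 1) (Hrho : 0 < rho).

Lemma smax_list_sup_of_forms vs :
  sup_of_forms (smax_list d rho vs) /\ pos_def (smax_list d rho vs).
Proof.
  induction vs as [|v vs [IHs IHp]]; simpl.
  - split; [apply scaled_dot_sup_of_forms; lra|apply scaled_dot_pos_def; auto].
  - split; [apply smax_sup_of_forms|apply smax_pos_def]; auto using sq_dot_sup_of_forms.
Qed.

Lemma smax_list_ge0 vs y : 0 <= smax_list d rho vs y.
Proof. apply sup_of_forms_ge0, smax_list_sup_of_forms. Qed.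

Lemma smax_list_ge vs v y : In v vs -> dot v y * dot v y <= smax_list d rho vs y.
Proof.
  induction vs as [|w vs IH]; simpl; [tauto|].
  pose proof (Rle_0_sqr (dot w y)); pose proof (smax_list_ge0 vs y).
  intros [<-|Hv].
  - apply smax_ge_l; auto; lra.
  - eapply Rle_trans; [apply IH, Hv|apply smax_ge_r; auto; lra].
Qed.

Lemma smax_list_le vs y m :
  (forall v, In v vs -> dot v y * dot v y <= m) -> rho * dot y y <= m ->
  smax_list d rho vs y <= m * (1 + d)^(length vs).
Proof.
  induction vs as [|v vs IH]; simpl; intros Hv H0; [lra|].
  assert (Hm : 0 <= m) by (pose proof (dot_self_ge0 y); nra).
  pose proof (pow_R1_Rle (1 + d) (length vs) ltac:(lra)).
  replace (m * ((1 + d) * (1 + d)^(length vs))) with ((1 + d) * (m * (1 + d)^(length vs)))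
    by ring.
  apply smax_le; [lra|apply Rle_0_sqr|apply smax_list_ge0| |auto].
  pose proof (Hv v (or_introl eq_refl)); nra.
Qed.

(* If one square dominates all the others by the factor [th], with enough room left for the
   [(1 + d)]-losses of the later maxima, the smooth maximum picks it exactly. *)
Lemma smax_list_peak pre w post y th :
  0 <= th -> th * (1 + d)^(S (length post)) <= 1 - d ->
  (forall v, In v (pre ++ post) -> dot v y * dot v y <= th * (dot w y * dot w y)) ->
  rho * dot y y <= th * (dot w y * dot w y) ->
  smax_list d rho (pre ++ w :: post) y = dot w y * dot w y.
Proof.
  intros Hth Hroom Hv H0; set (T := dot w y * dot w y) in *.
  assert (HT : 0 <= T) by apply Rle_0_sqr.
  pose proof (pow_R1_Rle (1 + d) (length post) ltac:(lra)).
  assert (Hroom1 : th * (1 + d) <= 1 - d).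
  { eapply Rle_trans; [|exact Hroom]; simpl; apply Rmult_le_compat_l; nra. }
  induction pre as [|v pre IH]; simpl.
  - apply smax_eq_l; [lra|auto|apply smax_list_ge0|].
    pose proof (smax_list_le post y (th * T) ltac:(intros; apply Hv; simpl; auto) H0).
    simpl in Hroom.
    apply Rle_trans with (th * T * (1 + d)^(length post) * (1 + d)); [nra|].
    replace (th * T * (1 + d)^(length post) * (1 + d)) with (T * (th * ((1 + d) * (1 + d)^(length post))))
      by ring.
    apply Rmult_le_compat_l; auto.
  - rewrite IH by (intros; apply Hv; simpl; auto).
    apply smax_eq_r; [lra|apply Rle_0_sqr|auto|].
    pose proof (Hv v (or_introl eq_refl)); nra.
Qed.

End SmaxList.

Lemma bernoulli_inv d n : 0 <= d -> INR n * d <= 1 -> (1 + d)^n * (1 - INR n * d) <= 1.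
Proof.
  intro Hd; induction n as [|n IH]; intro Hn; [simpl; lra|].
  rewrite S_INR in *; simpl.
  pose proof (pos_INR n); pose proof (pow_R1_Rle (1 + d) n ltac:(lra)).
  assert (IH' : (1 + d)^n * (1 - INR n * d) <= 1) by (apply IH; nra).
  assert (Hstep : (1 + d) * (1 - (INR n + 1) * d) <= 1 - INR n * d).
  { assert (0 <= INR n * d * d) by (apply Rmult_le_pos; [apply Rmult_le_pos|]; lra). nra. }
  apply Rle_trans with ((1 + d)^n * (1 - INR n * d)); [|exact IH'].
  replace ((1 + d) * (1 + d)^n * (1 - (INR n + 1) * d))
    with ((1 + d)^n * ((1 + d) * (1 - (INR n + 1) * d))) by ring.
  apply Rmult_le_compat_l; lra.
Qed.

Lemma exists_room th K : 0 <= th < 1 -> exists d, 0 < d < 1 /\ th * (1 + d)^K <= 1 - d.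
Proof.
  intro Hth; pose proof (pos_INR K).
  set (s := 1 - th); set (d := s / (4 * (INR K + 1))).
  assert (Hd : 0 < d) by (apply Rdiv_lt_0_compat; unfold s; lra).
  assert (HKd : (INR K + 1) * d = s / 4) by (unfold d; field; lra).
  exists d; split; [unfold s in *; nra|].
  pose proof (bernoulli_inv d K ltac:(lra) ltac:(unfold s in *; nra)) as HB.
  assert (HKd' : 0 < 1 - INR K * d) by (unfold s in *; nra).
  assert (th <= (1 - d) * (1 - INR K * d)) by (unfold s in *; nra).
  apply Rmult_le_reg_r with (1 - INR K * d); auto.
  pose proof (pow_R1_Rle (1 + d) K ltac:(lra)); nra.
Qed.

(** * Norms taking the value 1 at prescribed points *)

Lemma finite_bound {A} (l : list A) (F : A -> R) :
  exists M, 0 <= M /\ forall a, In a l -> F a <= M.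
Proof.
  induction l as [|a l (M & HM & Hb)]; [exists 0; split; [lra|easy]|].
  exists (Rmax M (F a)); split; [eapply Rle_trans; [exact HM|apply Rmax_l]|].
  intros b [<-|Hb']; [apply Rmax_r|eapply Rle_trans; [apply Hb, Hb'|apply Rmax_l]].
Qed.

Lemma finite_strict_bound {A} (l : list A) (S : A -> Prop) (F : A -> R) :
  (forall a, In a l -> S a -> F a < 1) ->
  exists th, 0 < th < 1 /\ forall a, In a l -> S a -> F a <= th.
Proof.
  induction l as [|a l IH]; intro H; [exists (1 / 2); split; [lra|easy]|].
  destruct IH as (th & Hth & Hb); [intros; apply H; simpl; auto|].
  destruct (classic (S a)) as [Ha|Ha].
  - exists (Rmax th (F a)); split.
    + split; [eapply Rlt_le_trans; [apply Hth|apply Rmax_l]|].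
      apply Rmax_lub_lt; [lra|apply H; simpl; auto].
    + intros b [<-|Hb'] Sb; [apply Rmax_r|eapply Rle_trans; [apply Hb; auto|apply Rmax_l]].
  - exists th; split; auto; intros b [<-|Hb'] Sb; [contradiction|auto].
Qed.

Section PrescribedUnitPoints.

Variables (I : Type) (P : list I) (z u : I -> V4).
Hypotheses (HP : NoDup P) (Hpeak : forall p, In p P -> dot (u p) (z p) = 1).

Section FixedConstants.

Variables (th0 M d : R).
Hypotheses (Hth0 : 0 < th0 < 1) (Hd : 0 < d < 1)
  (Hsep : forall p q, In p P -> In q P -> p <> q -> Rabs (dot (u q) (z p)) <= th0)
  (HM0 : 0 <= M) (HM : forall p, In p P -> enorm (z p) <= M)
  (Hroom : (2 * th0 / (1 + th0))^2 * (1 + d)^(length P) <= 1 - d).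

Let eps := (1 - th0) / (2 * (M + 1)).
(* chosen so that [mnorm eps Q (z p) = eps * enorm (z p) + kap p = 1] *)
Let kap p := 1 - eps * enorm (z p).
Let rho := th0^2 / (M * M + 1).
Let Q := smax_list d rho (map (fun p => vscale (kap p) (u p)) P).

Lemma eps_pos : 0 < eps.
Proof. unfold eps; apply Rdiv_lt_0_compat; lra. Qed.

Lemma rho_pos : 0 < rho.
Proof. unfold rho; apply Rdiv_lt_0_compat; nra. Qed.

Lemma kap_range p : In p P -> (1 + th0) / 2 <= kap p <= 1.
Proof.
  intro Hp; unfold kap; pose proof (HM p Hp); pose proof (enorm_ge0 (z p)); pose proof eps_pos.
  assert (eps * enorm (z p) <= (1 - th0) / 2).
  { apply Rle_trans with (eps * (M + 1)); [apply Rmult_le_compat_l; lra|].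
    unfold eps; apply Req_le; field; lra. }
  split; [lra|nra].
Qed.

Lemma small_terms_le p : In p P ->
  th0^2 <= (2 * th0 / (1 + th0))^2 * (kap p * kap p).
Proof.
  intro Hp; pose proof (kap_range p Hp).
  replace (th0^2) with ((2 * th0 / (1 + th0))^2 * (((1 + th0) / 2) * ((1 + th0) / 2)))
    by (field; lra).
  apply Rmult_le_compat_l; [apply pow2_ge_0|nra].
Qed.

Lemma Q_at_point p : In p P -> Q (z p) = kap p * kap p.
Proof.
  intro Hp; destruct (in_split p P Hp) as (pre & post & EP).
  pose proof (kap_range p Hp); pose proof (small_terms_le p Hp).
  set (w := fun q => vscale (kap q) (u q)).
  assert (Hw : forall q, dot (w q) (z p) = kap q * dot (u q) (z p)) by (intro; apply dot_scalel).
  unfold Q; fold w; rewrite EP, map_app; simpl.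
  rewrite (smax_list_peak d rho Hd rho_pos (map w pre) (w p) (map w post) (z p)
             ((2 * th0 / (1 + th0))^2)).
  - rewrite Hw, Hpeak by auto; ring.
  - apply pow2_ge_0.
  - eapply Rle_trans; [|exact Hroom]; apply Rmult_le_compat_l; [apply pow2_ge_0|].
    apply Rle_pow; [lra|]; rewrite length_map, EP, length_app; simpl; lia.
  - rewrite Hw, Hpeak, Rmult_1_r by auto.
    intros v Hv; rewrite <- map_app in Hv; apply in_map_iff in Hv as (q & <- & Hq).
    assert (HqP : In q P) by (rewrite EP; apply in_app_or in Hq; apply in_or_app; simpl; tauto).
    assert (Hqp : q <> p).
    { intros ->; eapply NoDup_remove_2; [rewrite <- EP; exact HP|exact Hq]. }
    pose proof (Hsep p q Hp HqP (not_eq_sym Hqp)) as Hs; pose proof (kap_range q HqP).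
    rewrite Hw; eapply Rle_trans; [|eassumption].
    pose proof (Rabs_pos (dot (u q) (z p))).
    replace (kap q * dot (u q) (z p) * (kap q * dot (u q) (z p)))
      with ((kap q * kap q) * (Rabs (dot (u q) (z p)) * Rabs (dot (u q) (z p))))
      by (rewrite <- Rabs_mult; rewrite Rabs_pos_eq by apply Rle_0_sqr; ring).
    set (r := Rabs (dot (u q) (z p))) in *.
    simpl; rewrite Rmult_1_r, <- (Rmult_1_l (th0 * th0)).
    apply Rmult_le_compat; nra.
  - rewrite Hw, Hpeak, Rmult_1_r by auto; eapply Rle_trans; [|eassumption].
    pose proof (HM p Hp); pose proof (enorm_ge0 (z p)).
    rewrite <- enorm_sq; unfold rho.
    apply Rle_trans with (th0^2 / (M * M + 1) * (M * M + 1)).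
    + apply Rmult_le_compat_l; [apply Rmult_le_pos; [apply pow2_ge_0|]; left;
        apply Rinv_0_lt_compat; nra|nra].
    + apply Req_le; field; nra.
Qed.

Lemma mnorm_at_point p : In p P -> mnorm eps Q (z p) = 1.
Proof.
  intro Hp; pose proof (kap_range p Hp).
  unfold mnorm; rewrite Q_at_point, sqrt_square by (auto; lra); unfold kap; ring.
Qed.

Lemma mnorm_gt_one p y : In p P -> dot (u p) y = 1 -> enorm (z p) < enorm y ->
  1 < mnorm eps Q y.
Proof.
  intros Hp Hy Hlt; pose proof (kap_range p Hp).
  assert (Hk : kap p <= sqrt (Q y)).
  { rewrite <- (sqrt_square (kap p)) by lra.
    apply sqrt_le_1; [nra|apply (smax_list_ge0 d rho Hd rho_pos)|].
    replace (kap p) with (dot (vscale (kap p) (u p)) y) by (rewrite dot_scalel, Hy; ring).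
    apply (smax_list_ge d rho Hd rho_pos), in_map_iff; eauto. }
  pose proof eps_pos; assert (eps * enorm (z p) < eps * enorm y) by (apply Rmult_lt_compat_l; auto).
  unfold mnorm, kap in *; lra.
Qed.

Lemma prescribed_mnorm_props :
  is_norm (mnorm eps Q) /\ smooth (mnorm eps Q) /\ strictly_convex (mnorm eps Q).
Proof.
  destruct (smax_list_sup_of_forms d rho Hd rho_pos (map (fun p => vscale (kap p) (u p)) P))
    as (HQ & HQp); pose proof eps_pos.
  split; [|split]; [apply mnorm_is_norm|apply mnorm_smooth|apply mnorm_strictly_convex]; auto.
Qed.

End FixedConstants.

Lemma exists_norm_unit_on_points :
  (forall p q, In p P -> In q P -> p <> q -> Rabs (dot (u q) (z p)) < 1) ->
  exists N, is_norm N /\ smooth N /\ strictly_convex N /\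
    forall p, In p P -> N (z p) = 1 /\
      forall y, dot (u p) y = 1 -> enorm (z p) < enorm y -> 1 < N y.
Proof.
  intro Hlt1.
  destruct (finite_strict_bound (list_prod P P) (fun pq => fst pq <> snd pq)
              (fun pq => Rabs (dot (u (snd pq)) (z (fst pq))))) as (th0 & Hth0 & Hb).
  { intros [p q] Hpq; apply in_prod_iff in Hpq; apply Hlt1; tauto. }
  destruct (finite_bound P (fun p => enorm (z p))) as (M & HM0 & HM).
  assert (Hth : 0 <= (2 * th0 / (1 + th0))^2 < 1).
  { split; [apply pow2_ge_0|].
    assert (0 <= 2 * th0 / (1 + th0) < 1).
    { split; [apply Rmult_le_pos; [lra|left; apply Rinv_0_lt_compat; lra]|].
      apply Rmult_lt_reg_r with (1 + th0); [lra|].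
      replace (2 * th0 / (1 + th0) * (1 + th0)) with (2 * th0) by (field; lra); lra. }
    simpl; nra. }
  destruct (exists_room _ (length P) Hth) as (d & Hd & Hroom).
  assert (Hsep : forall p q, In p P -> In q P -> p <> q -> Rabs (dot (u q) (z p)) <= th0)
    by (intros p q Hp Hq Hpq; apply (Hb (p, q)); [apply in_prod_iff|]; auto).
  destruct (prescribed_mnorm_props th0 M d Hth0 Hd HM0) as (N1 & N2 & N3).
  eexists; split; [exact N1|split; [exact N2|split; [exact N3|]]].
  intros p Hp; split.
  - apply mnorm_at_point; auto.
  - intros; eapply mnorm_gt_one; eauto.
Qed.

End PrescribedUnitPoints.

(** * Points on a trigonometric curve in R^4 *)

Definition curve (t : R) : V4 := mkV4 (cos t) (sin t) (cos (3 * t)) (sin (3 * t)).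

Definition cubic (y0 y : R) : R := (3 * y0^2 * y - y^3) / (2 * y0^3).

(* With [c = (ti + tj) / 2] and [y0 = cos ((tj - ti) / 2)], this functional evaluates at
   [curve t] to [cubic y0 (cos (t - c))] (use [cos 3s = 4 cos^3 s - 3 cos s]).  Since
   [1 - cubic y0 y = (y - y0)^2 (y + 2 y0) / (2 y0^3)] and
   [1 + cubic y0 y = (2 y0 - y) (y + y0)^2 / (2 y0^3)], it equals [1] exactly at [t = ti, tj]
   and lies in [(-1, 1)] at the other points of the arc. *)
Definition chord_functional (ti tj : R) : V4 :=
  let c := (ti + tj) / 2 in
  let y0 := cos ((tj - ti) / 2) in
  let B := -1 / (8 * y0^3) in
  let A := 3 / (2 * y0) + 3 * B in
  mkV4 (A * cos c) (A * sin c) (B * cos (3 * c)) (B * sin (3 * c)).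

Lemma cos_3x s : cos (3 * s) = 4 * cos s ^ 3 - 3 * cos s.
Proof.
  replace (3 * s) with (2 * s + s) by ring; rewrite cos_plus, cos_2a_cos, sin_2a.
  assert (S : sin s * sin s = 1 - cos s * cos s) by (pose proof (sin2_cos2 s); unfold Rsqr in *; lra).
  replace (2 * sin s * cos s * sin s) with (2 * cos s * (sin s * sin s)) by ring; rewrite S; ring.
Qed.

Lemma dot_curve t : dot (curve t) (curve t) = 2.
Proof.
  unfold curve, dot; simpl; pose proof (sin2_cos2 t); pose proof (sin2_cos2 (3 * t)).
  unfold Rsqr in *; lra.
Qed.

Lemma curve_inj s t : 0 <= s < 1 -> 0 <= t < 1 -> curve s = curve t -> s = t.
Proof.
  intros Hs Ht E; injection E; intros; pose proof PI2_3_2.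
  apply cos_inj; lra.
Qed.

Lemma dot_chord_functional_curve ti tj t : cos ((tj - ti) / 2) <> 0 ->
  dot (chord_functional ti tj) (curve t) = cubic (cos ((tj - ti) / 2)) (cos (t - (ti + tj) / 2)).
Proof.
  intro Hy; unfold chord_functional, curve, dot, cubic; simpl.
  set (c := (ti + tj) / 2); set (y0 := cos ((tj - ti) / 2)).
  transitivity ((3 / (2 * y0) + 3 * (-1 / (8 * y0^3))) * cos (t - c)
                + (-1 / (8 * y0^3)) * cos (3 * (t - c))).
  - replace (3 * (t - c)) with (3 * t - 3 * c) by ring; rewrite !cos_minus; field; auto.
  - rewrite cos_3x; field; auto.
Qed.

Lemma chord_functional_curve ti tj t : 0 <= ti -> ti < tj -> tj < 1 -> 0 <= t < 1 ->
  let v := dot (chord_functional ti tj) (curve t) in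
  -1 < v <= 1 /\ (v = 1 <-> t = ti \/ t = tj).
Proof.
  intros H1 H2 H3 H4 v; pose proof PI2_3_2.
  set (h := (tj - ti) / 2); set (y0 := cos h).
  assert (Hy0 : 1 / 2 < y0) by (rewrite <- cos_PI3; apply cos_decreasing_1; unfold h; lra).
  assert (Hy0' : y0 <= 1) by apply COS_bound.
  set (s := t - (ti + tj) / 2); set (y := cos s).
  assert (Hy : 0 < y) by (apply cos_gt_0; unfold s; lra).
  assert (Hy' : y <= 1) by apply COS_bound.
  assert (Hv : v = cubic y0 y) by (apply dot_chord_functional_curve; fold h y0; lra).
  assert (P3 : 0 < 2 * y0^3) by (simpl; nra).
  assert (Hlo : cubic y0 y + 1 = (2 * y0 - y) * (y + y0)^2 / (2 * y0^3))
    by (unfold cubic; field; lra).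
  assert (Hhi : 1 - cubic y0 y = (y - y0)^2 * (y + 2 * y0) / (2 * y0^3))
    by (unfold cubic; field; lra).
  assert (0 < (2 * y0 - y) * (y + y0)^2 / (2 * y0^3))
    by (apply Rdiv_lt_0_compat; auto; apply Rmult_lt_0_compat; [lra|apply pow_lt; lra]).
  assert (0 <= (y - y0)^2 * (y + 2 * y0) / (2 * y0^3))
    by (apply Rmult_le_pos; [apply Rmult_le_pos; [apply pow2_ge_0|lra]|
        left; apply Rinv_0_lt_compat; lra]).
  split; [lra|split].
  - intro E; assert (Ey : y = y0).
    { rewrite Hv in E; rewrite E, Rminus_diag in Hhi.
      assert (Hz : (y - y0)^2 * (y + 2 * y0) = 0).
      { apply Rmult_eq_reg_r with (/ (2 * y0^3)); [|apply Rinv_neq_0_compat; lra].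
        rewrite Rmult_0_l; exact (eq_sym Hhi). }
      apply Rmult_integral in Hz as [Hz|]; [|lra].
      simpl in Hz; nra. }
    unfold y, y0 in Ey; destruct (Rle_dec 0 s).
    + apply cos_inj in Ey; unfold s, h in *; lra.
    + rewrite <- cos_neg in Ey; apply cos_inj in Ey; unfold s, h in *; lra.
  - intro Ht; assert (Ey : y = y0).
    { unfold y, y0, s, h; destruct Ht as [-> | ->]; [rewrite <- cos_neg|]; f_equal; field. }
    rewrite Hv, Ey; unfold cubic; field; lra.
Qed.

Lemma NoDup_list_prod {A B} (l : list A) (l' : list B) :
  NoDup l -> NoDup l' -> NoDup (list_prod l l').
Proof.
  intros H H'; induction H as [|a l Ha Hl IH]; simpl; [constructor|].
  apply NoDup_app; auto.
  - apply NoDup_map_NoDup_ForallPairs; auto; intros x y _ _ E; now injection E.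
  - intros p Hp Hq; apply in_map_iff in Hp as (y & <- & _); apply in_prod_iff in Hq; tauto.
Qed.

Definition grid (m k : nat) : R := INR k / INR m.

Definition pairs (m : nat) : list (nat * nat) :=
  filter (fun p => Nat.ltb (fst p) (snd p)) (list_prod (seq 0 m) (seq 0 m)).

Definition point (m k : nat) : V4 := curve (grid m k).

Definition pair_midpoint (m : nat) (p : nat * nat) : V4 :=
  midpoint (point m (fst p)) (point m (snd p)).

Definition chord (m : nat) (p : nat * nat) : V4 :=
  chord_functional (grid m (fst p)) (grid m (snd p)).

Lemma grid_range m k : (k < m)%nat -> 0 <= grid m k < 1.
Proof.
  intro Hk; unfold grid; assert (0 < INR m) by (apply lt_0_INR; lia).
  assert (INR k < INR m) by (apply lt_INR; auto); pose proof (pos_INR k).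
  split; [apply Rmult_le_pos; [lra|left; apply Rinv_0_lt_compat; lra]|].
  apply Rmult_lt_reg_r with (INR m); auto; unfold Rdiv; rewrite Rmult_assoc, Rinv_l; lra.
Qed.

Lemma grid_lt m i j : (i < j < m)%nat -> grid m i < grid m j.
Proof.
  intro; unfold grid; apply Rmult_lt_compat_r; [apply Rinv_0_lt_compat, lt_0_INR; lia|].
  apply lt_INR; lia.
Qed.

Lemma grid_inj m i j : (i < m)%nat -> (j < m)%nat -> grid m i = grid m j -> i = j.
Proof.
  intros Hi Hj E; destruct (PeanoNat.Nat.lt_trichotomy i j) as [Hij|[|Hij]]; auto; exfalso.
  - pose proof (grid_lt m i j ltac:(lia)); lra.
  - pose proof (grid_lt m j i ltac:(lia)); lra.
Qed.

Lemma point_inj m i j : (i < m)%nat -> (j < m)%nat -> point m i = point m j -> i = j.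
Proof. intros Hi Hj E; apply curve_inj in E; auto using grid_range; apply grid_inj in E; auto. Qed.

Lemma in_pairs m i j : In (i, j) (pairs m) <-> (i < j < m)%nat.
Proof.
  unfold pairs; rewrite filter_In, in_prod_iff, !in_seq; simpl.
  rewrite PeanoNat.Nat.ltb_lt; lia.
Qed.

Lemma pairs_NoDup m : NoDup (pairs m).
Proof. apply NoDup_filter, NoDup_list_prod; apply seq_NoDup. Qed.

Lemma chord_point m k l i : (k < l < m)%nat -> (i < m)%nat ->
  let v := dot (chord m (k, l)) (point m i) in
  -1 < v <= 1 /\ (v = 1 <-> i = k \/ i = l).
Proof.
  intros Hkl Hi v; unfold v, chord, point; simpl.
  pose proof (grid_range m k ltac:(lia)); pose proof (grid_range m l ltac:(lia)).
  destruct (chord_functional_curve (grid m k) (grid m l) (grid m i)) as (Hr & Hiff);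
    [lra|apply grid_lt; lia|lra|apply grid_range; auto|].
  split; [exact Hr|]; rewrite Hiff; split.
  - intros [E|E]; apply grid_inj in E; auto; lia.
  - intros [->| ->]; auto.
Qed.

Lemma chord_pair_midpoint_self m p : In p (pairs m) -> dot (chord m p) (pair_midpoint m p) = 1.
Proof.
  destruct p as [i j]; rewrite in_pairs; intro Hp; unfold pair_midpoint; simpl.
  rewrite dot_midpointl.
  destruct (chord_point m i j i Hp ltac:(lia)) as (_ & Hi).
  destruct (chord_point m i j j Hp ltac:(lia)) as (_ & Hj).
  rewrite (proj2 Hi), (proj2 Hj) by auto; field.
Qed.

Lemma chord_pair_midpoint_other m p q : In p (pairs m) -> In q (pairs m) -> p <> q ->
  Rabs (dot (chord m q) (pair_midpoint m p)) < 1.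
Proof.
  destruct p as [i j], q as [k l]; rewrite !in_pairs; intros Hp Hq Hpq.
  unfold pair_midpoint; simpl; rewrite dot_midpointl.
  destruct (chord_point m k l i Hq ltac:(lia)) as (Ri & Hi).
  destruct (chord_point m k l j Hq ltac:(lia)) as (Rj & Hj).
  (* the average of two values in (-1, 1] reaches 1 only if both are 1 *)
  apply Rabs_def1; [|lra].
  destruct (Req_dec (dot (chord m (k, l)) (point m i)) 1) as [Ei|];
    destruct (Req_dec (dot (chord m (k, l)) (point m j)) 1) as [Ej|]; try lra.
  apply Hi in Ei; apply Hj in Ej; destruct Hpq; f_equal; lia.
Qed.

Lemma enorm_pair_midpoint_lt m p i : In p (pairs m) ->
  enorm (pair_midpoint m p) < enorm (point m i).
Proof.
  destruct p as [k l]; rewrite in_pairs; intro Hp; apply enorm_lt.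
  assert (Hpt : forall j, dot (point m j) (point m j) = 2) by (intro; apply dot_curve).
  unfold pair_midpoint; rewrite dot_midpoint, !Hpt; simpl.
  enough (0 < dot (vsub (point m k) (point m l)) (vsub (point m k) (point m l))) by lra.
  rewrite <- enorm_sq; apply Rmult_lt_0_compat; apply enorm_gt0; intro E;
    apply vsub_eq0, point_inj in E; lia.
Qed.

Lemma curve_points_M_set m : (2 <= m)%nat ->
  exists N, is_norm N /\ smooth N /\ strictly_convex N /\
    M_set N (map (point m) (seq 0 m)).
Proof.
  intro Hm.
  destruct (exists_norm_unit_on_points _ (pairs m) (pair_midpoint m) (chord m)
              (pairs_NoDup m) (chord_pair_midpoint_self m) (chord_pair_midpoint_other m))
    as (N & N1 & N2 & N3 & HN).
  exists N; split; [auto|split; [auto|split; [auto|split; [|split]]]].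
  - apply NoDup_map_NoDup_ForallPairs; [|apply seq_NoDup].
    intros i j Hi Hj; apply in_seq in Hi; apply in_seq in Hj; apply point_inj; lia.
  - intros x Hx; apply in_map_iff in Hx as (i & <- & Hi); apply in_seq in Hi.
    set (j := if Nat.eqb i 0 then 1%nat else 0%nat).
    assert (Hj : j <> i /\ (j < m)%nat) by (unfold j; destruct (Nat.eqb_spec i 0); lia).
    assert (Hp : In (Nat.min i j, Nat.max i j) (pairs m)) by (apply in_pairs; lia).
    apply (HN _ Hp); [|apply enorm_pair_midpoint_lt; auto].
    apply chord_point; lia.
  - intros x y Hx Hy Hxy.
    apply in_map_iff in Hx as (i & <- & Hi); apply in_seq in Hi.
    apply in_map_iff in Hy as (j & <- & Hj); apply in_seq in Hj.
    assert (Hij : i <> j) by (intros ->; auto).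
    destruct (PeanoNat.Nat.lt_gt_cases i j) as [[Hlt|Hlt] _]; auto.
    + apply (HN (i, j)), in_pairs; lia.
    + replace (midpoint (point m i) (point m j)) with (pair_midpoint m (j, i)) by apply midpoint_comm.
      apply HN, in_pairs; lia.
Qed.

Theorem theorem5 : forall n : nat, (1 <= n)%nat ->
  exists N : V4 -> R, is_norm N /\ smooth N /\ strictly_convex N /\
    exists S : list V4, M_set N S /\ (n <= length S)%nat.
Proof.
  intros n Hn.
  destruct (curve_points_M_set (S n) ltac:(lia)) as (N & N1 & N2 & N3 & HS).
  exists N; split; [|split; [|split]]; auto.
  exists (map (point (S n)) (seq 0 (S n))); split; auto.
  rewrite length_map, length_seq; lia.
Qed.
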